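(* Fix $n\in\mathbb N$, a noise level $\varepsilon\in[0,1)$ and a target risk level $\bar q\in[0,1]$. Let $G$ be the complete graph on $n$ vertices. Under the Water-Filling Strategy $\psi^{wf}_{\bar q}$, the goal-hitting time $T^{wf}$ and intentional goal-hitting time $T^{wf}_{IH}$ satisfy $$\mathbb E(T^{wf})\le\mathbb E(T^{wf}_{IH})\le\frac1{2\bar q}+\frac12+\frac{\bar q\varepsilon}{2(1-\varepsilon)^2}.$$
   Context: Model: neighborhoods $\mathcal N(v)$; in the complete graph on $n$ vertices every vertex is adjacent to every vertex including itself, so $|\mathcal N(v)|=n$. Goal $D$ uniform on vertices; fixed initial vertex; horizon $K$; $B_1,\dots,B_K$ i.i.d. Bernoulli$(1-\varepsilon)$ independent of all else. The agent in state $X_t$ chooses $a_t\in\mathcal N(X_t)$; if $B_t=1$, $X_{t+1}=a_t$, else $X_{t+1}$ uniform on $\mathcal N(X_t)$. $T=\inf\{t\ge1:X_t=D\}$; if not reached by $K$, set $X_{K+1}=D$, $B_K=1$. Random-Step: $a_t$ uniform on $\mathcal N(X_t)$; Goal-Attempt: $a_t=D$ (only if $D\in\mathcal N(X_t)$). $T_{IH}=\inf\{t\ge1:$ Goal-Attempt at $t-1$ and $B_{t-1}=1\}$ ($\le K+1$). $L(t)=\sum_{s\le t}\mathbb I(X_s\in\mathcal N(D))$. Water-Filling Strategy $\psi^{wf}_{\bar q}$: $t^*=\lceil1/\bar q-\varepsilon/(1-\varepsilon)\rceil$ (standing assumption: $1/\bar q-\varepsilon/(1-\varepsilon)$ is an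 integer), $p_t=\frac{\bar q}{1-\varepsilon}(1-t\bar q)^{-1}$ for $0\le t<t^*-1$, $p_t=1$ otherwise; at time $t$, if $X_t\in\mathcal N(D)$ and $T_{IH}>t$, Goal-Attempt with probability $p_{L(t)}$, else Random-Step; otherwise Random-Step. *)

From mathcomp Require Import all_boot all_order all_algebra.
Set Implicit Arguments. Unset Strict Implicit. Unset Printing Implicit Defensive.
Import Order.TTheory GRing.Theory Num.Theory.
Local Open Scope ring_scope.

(* Complete graph on n vertices (vertex set 'I_n), every vertex adjacent to   *)
(* every vertex including itself: N(v) = all n vertices.                      *)
Definition nbhd (n : nat) (v : 'I_n) : {set 'I_n} := [set: 'I_n].
Definition inN (n : nat) (x v : 'I_n) : bool := x \in nbhd v.

(* Randomness used at step t (t = 0 .. K-1):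
     (G_t, B_t, A_t, N_t) where
     G_t : the strategy decides to Goal-Attempt (true) or Random-Step (false);
     B_t : the Bernoulli(1-eps) "action executed" indicator;
     A_t : the uniform action chosen on N(X_t) when Random-Stepping;
     N_t : the uniform noise successor on N(X_t) used when B_t = 0.          *)
Definition step (n : nat) := (bool * bool * 'I_n * 'I_n)%type.
Definition stG n (s : step n) : bool := s.1.1.1.
Definition stB n (s : step n) : bool := s.1.1.2.
Definition stA n (s : step n) : 'I_n := s.1.2.
Definition stN n (s : step n) : 'I_n := s.2.

(* Sample space: goal D and the K step-randomness records. *)
Definition outcome (n K : nat) := ('I_n * {ffun 'I_K -> step n})%type.

Definition stepAt (n K : nat) (x0 : 'I_n) (w : {ffun 'I_K -> step n}) (t : nat)
  : step n :=
  match insub t with Some i => w i | None => (false, false, x0, x0) end.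

(* Trajectory X_0 = x0, X_{t+1} = a_t if B_t = 1, else uniform noise N_t,
   where a_t = D for a Goal-Attempt and a_t = A_t for a Random-Step.
   (On the complete graph N(X_t) = 'I_n, so X_{t+1} does not depend on X_t
   beyond the strategy's choice; hence no recursion is needed.) *)
Definition traj (n K : nat) (x0 : 'I_n) (om : outcome n K) (t : nat) : 'I_n :=
  match t with
  | 0 => x0
  | t'.+1 =>
      let s := stepAt x0 om.2 t' in
      if stB s then (if stG s then om.1 else stA s) else stN s
  end.

Definition ih_by (n K : nat) (om : outcome n K) (t : nat) : bool :=
  [exists s : 'I_K, (s < t)%N && stG (om.2 s) && stB (om.2 s)].

Definition Lcount (n K : nat) (x0 : 'I_n) (om : outcome n K) (t : nat) : nat :=
  (\sum_(1 <= s < t.+1) inN (traj x0 om s) om.1)%N.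

(* Goal-hitting time T = inf{t >= 1 : X_t = D}, set to K+1 if not reached by K. *)
Definition hitT (n K : nat) (x0 : 'I_n) (om : outcome n K) : nat :=
  \big[minn/K.+1]_(s < K | traj x0 om s.+1 == om.1) s.+1.

(* Intentional hitting time T_IH = inf{t >= 1 : Goal-Attempt at t-1 and
   B_{t-1} = 1}, set to K+1 if no such t <= K. *)
Definition hitTIH (n K : nat) (om : outcome n K) : nat :=
  \big[minn/K.+1]_(s < K | stG (om.2 s) && stB (om.2 s)) s.+1.

Definition tstar (R : archiRealFieldType) (eps qb : R) : int :=
  Num.ceil (qb^-1 - eps / (1 - eps)).

Definition pwf (R : archiRealFieldType) (eps qb : R) (t : nat) : R :=
  if ((t : int) < tstar eps qb - 1)%R
  then qb / (1 - eps) * (1 - t%:R * qb)^-1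
  else 1.

Definition wf_attempt_prob (R : archiRealFieldType) (eps qb : R)
  (n K : nat) (x0 : 'I_n) (om : outcome n K) (t : nat) : R :=
  if inN (traj x0 om t) om.1 && ~~ ih_by om t
  then pwf eps qb (Lcount x0 om t) else 0.

(* Probability weight of an outcome under psi^wf: D uniform; at each step
   t < K the attempt decision has the (history dependent) strategy law,
   A_t and N_t are uniform on N(X_t) = 'I_n, B_t ~ Bernoulli(1 - eps). *)
Definition wf_weight (R : archiRealFieldType) (eps qb : R)
  (n K : nat) (x0 : 'I_n) (om : outcome n K) : R :=
  (n%:R)^-1 *
  \prod_(t < K)
    (let s := om.2 t in
     let p := wf_attempt_prob eps qb x0 om t in
     (if stG s then p else 1 - p) * (n%:R)^-1 *
     (if stB s then 1 - eps else eps) * (n%:R)^-1).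

Definition wf_expect (R : archiRealFieldType) (eps qb : R)
  (n K : nat) (x0 : 'I_n) (f : outcome n K -> nat) : R :=
  \sum_(om : outcome n K) wf_weight eps qb x0 om * (f om)%:R.

From mathcomp Require Import all_boot all_order all_algebra.
From mathcomp Require Import ring lra zify.
Import Order.TTheory GRing.Theory Num.Theory.
Set Implicit Arguments. Unset Strict Implicit. Unset Printing Implicit Defensive.
Local Open Scope ring_scope.

(** On the complete graph every vertex is a neighbour of the goal, so L(t) = t
    and, until the first successful attempt, the water-filling strategy attempts
    the goal at time t with probability p_t.  The weight of an outcome is thus a
    product of step factors depending only on whether an attempt has already
    succeeded; summing out the steps from the last one gives
    P(T_IH > t) = prod_(s < t) (1 - (1 - eps) p_s), and E T_IH is the sum of
    these survival probabilities.
    With u_t = 1/q - t, the schedule satisfies (1 - eps) p_t = 1/u_t while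
    t < t* - 1, and p_t = 1 afterwards.  The expected remaining time
    V(t) = (u_t + 1)/2 + eps / (2 (1 - eps)^2 u_t) during the filling phase, and
    1/(1 - eps) afterwards, satisfies V(t) = 1 + (1 - (1 - eps) p_t) V(t + 1);
    telescoping bounds the truncated sum by V(0), which is the claimed bound when
    t* >= 2 and is below it otherwise because t* (t* - 1) >= 0 for an integer t*.
    Finally T <= T_IH pointwise: a successful goal-attempt lands on the goal. *)

Section FirstHit.
Variables (K : nat) (P : pred 'I_K).

Definition first_hit : nat := \big[minn/K.+1]_(s < K | P s) s.+1.
Definition hit_before (t : nat) : bool := [exists s : 'I_K, (s < t)%N && P s].

Lemma first_hit_le_max : (first_hit <= K.+1)%N.
Proof.
apply: (big_ind (fun m => m <= K.+1)%N) => // [m1 m2 le_m1 _|s _].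
  exact: leq_trans (geq_minl _ _) le_m1.
exact: ltnW (ltn_ord s).
Qed.

Lemma first_hit_le s : P s -> (first_hit <= s.+1)%N.
Proof.
rewrite /first_hit => Ps; have : s \in index_enum 'I_K by rewrite mem_index_enum.
elim: (index_enum _) => // i r IHr; rewrite inE big_cons => /predU1P[<-|/IHr].
  by rewrite Ps geq_minl.
by case: (P i) => // le_r; apply: leq_trans (geq_minr _ _) le_r.
Qed.

Lemma first_hit_gt t : (t <= K)%N -> (t < first_hit)%N = ~~ hit_before t.
Proof.
move=> le_tK; apply/idP/negP => [lt_t /existsP[s /andP[lt_st Ps]]|no_hit].
  by have := leq_trans lt_t (first_hit_le Ps); rewrite ltnS leqNgt lt_st.
apply: (big_ind (fun m => t < m)%N) => // [m1 m2|s Ps]; first by rewrite leq_min => ->.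
rewrite ltnS leqNgt; apply: contra_notN no_hit => lt_st.
by apply/existsP; exists s; rewrite lt_st.
Qed.

Lemma first_hit_count : first_hit = (\sum_(t < K.+1) ~~ hit_before t)%N.
Proof.
under eq_bigr => t _ do rewrite -(first_hit_gt (ltn_ord t)).
rewrite -big_mkcond -(big_ord_widen _ (fun _ => 1%N) first_hit_le_max).
by rewrite sum1_card card_ord.
Qed.

Lemma hit_before0 : hit_before 0 = false.
Proof. by apply/existsP => -[s]. Qed.

Lemma hit_before_ge t : (K <= t)%N -> hit_before t = [exists s, P s].
Proof.
by move=> le_Kt; apply: eq_existsb => s; rewrite (leq_trans (ltn_ord s) le_Kt).
Qed.

End FirstHit.

Lemma first_hit_subpred K (P Q : pred 'I_K) :
  subpred P Q -> (first_hit Q <= first_hit P)%N.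
Proof.
move=> PQ; apply: (big_ind (fun m => first_hit Q <= m)%N) => [|m1 m2|s Ps].
- exact: first_hit_le_max.
- by rewrite leq_min => ->.
- exact/first_hit_le/PQ.
Qed.

Section FfunRcons.
Variables (T : Type) (K : nat).

Definition ffun_rcons (w : {ffun 'I_K -> T}) (x : T) : {ffun 'I_K.+1 -> T} :=
  [ffun i => if unlift ord_max i is Some j then w j else x].

Lemma ffun_rcons_lift w x j : ffun_rcons w x (lift ord_max j) = w j.
Proof. by rewrite ffunE liftK. Qed.

Lemma ffun_rcons_max w x : ffun_rcons w x ord_max = x.
Proof. by rewrite ffunE unlift_none. Qed.

End FfunRcons.

Lemma sum_ffun_rcons (R : nmodType) (T : finType) K (F : {ffun 'I_K.+1 -> T} -> R) :
  \sum_f F f = \sum_(w : {ffun 'I_K -> T}) \sum_x F (ffun_rcons w x).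
Proof.
rewrite pair_big (reindex (fun wx => ffun_rcons wx.1 wx.2)) //=.
exists (fun f => ([ffun j => f (lift ord_max j)], f ord_max)) => [[w x] _|f _] /=.
  congr (_, _); last exact: ffun_rcons_max.
  by apply/ffunP => j; rewrite ffunE ffun_rcons_lift.
by apply/ffunP => i; rewrite ffunE; case: unliftP => [j|] ->; rewrite ?ffunE.
Qed.

Lemma sum_pair (R : nmodType) (I J : finType) (F : I * J -> R) :
  \sum_p F p = \sum_i \sum_j F (i, j).
Proof. by rewrite pair_big; apply: eq_bigr => -[]. Qed.

Definition attempt_succeeds n (s : step n) : bool := stG s && stB s.

Definition success_before n K (w : {ffun 'I_K -> step n}) : nat -> bool :=
  hit_before (fun s => attempt_succeeds (w s)).

Lemma success_before_rcons n K (w : {ffun 'I_K -> step n}) x t :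
  success_before (ffun_rcons w x) t
  = success_before w t || (K < t)%N && attempt_succeeds x.
Proof.
apply/existsP/orP => [[i]|[/existsP[j hit_j]|/andP[lt_Kt succ_x]]].
- case: (unliftP ord_max i) => [j|] ->.
    by rewrite ffun_rcons_lift lift_max => hit_j; left; apply/existsP; exists j.
  by rewrite ffun_rcons_max => hit_x; right.
- by exists (lift ord_max j); rewrite ffun_rcons_lift lift_max.
- by exists ord_max; rewrite ffun_rcons_max lt_Kt.
Qed.

Lemma success_before_rcons_le n K (w : {ffun 'I_K -> step n}) x t :
  (t <= K)%N -> success_before (ffun_rcons w x) t = success_before w t.
Proof. by move=> le_tK; rewrite success_before_rcons ltnNge le_tK orbF. Qed.

Lemma success_before_rcons_last n K (w : {ffun 'I_K -> step n}) x :
  success_before (ffun_rcons w x) K.+1 = success_before w K || attempt_succeeds x.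
Proof.
rewrite success_before_rcons ltnSn /success_before hit_before_ge //.
by rewrite -(hit_before_ge _ (leqnn K)).
Qed.

Lemma ih_by_success_before n K (om : outcome n K) t : ih_by om t = success_before om.2 t.
Proof. by apply: eq_existsb => s; rewrite andbA. Qed.

Section StepWeight.
Variables (R : numFieldType) (eps : R) (n : nat).
Hypothesis n_gt0 : (0 < n)%N.

Definition step_weight (q : R) (s : step n) : R :=
  (if stG s then q else 1 - q) * (n%:R)^-1 * (if stB s then 1 - eps else eps) * (n%:R)^-1.

Lemma sum_step_weightE q (f : bool -> bool -> R) :
  \sum_s step_weight q s * f (stG s) (stB s)
  = \sum_g \sum_b (if g then q else 1 - q) * (if b then 1 - eps else eps) * f g b.
Proof.
have n_neq0 : n%:R != 0 :> R by rewrite pnatr_eq0 -lt0n.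
rewrite !sum_pair; apply: eq_bigr => g _; apply: eq_bigr => b _.
rewrite /step_weight /stG /stB /= !sumr_const !card_ord -mulrnA -mulr_natr.
by field.
Qed.

Lemma sum_step_weight q : \sum_s step_weight q s = 1.
Proof.
under eq_bigr do rewrite -[step_weight _ _]mulr1.
by rewrite (sum_step_weightE q (fun _ _ => 1)) !big_bool /=; ring.
Qed.

Lemma sum_step_weight_fail q :
  \sum_s step_weight q s * (~~ attempt_succeeds s)%:R = 1 - (1 - eps) * q.
Proof.
by rewrite (sum_step_weightE q (fun g b => (~~ (g && b))%:R)) !big_bool /=; ring.
Qed.

End StepWeight.

Lemma step_weight_ge0 (R : realFieldType) (eps q : R) n (s : step n) :
  0 <= eps <= 1 -> 0 <= q <= 1 -> 0 <= step_weight eps q s.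
Proof.
move=> /andP[eps_ge0 eps_le1] /andP[q_ge0 q_le1]; rewrite /step_weight.
by case: (stG s); case: (stB s); rewrite !mulr_ge0 ?invr_ge0 ?ler0n ?subr_ge0.
Qed.

Section StrategyWeight.
Variables (R : numFieldType) (eps : R) (n : nat) (p : nat -> R).

Definition strategy_weight K (w : {ffun 'I_K -> step n}) : R :=
  \prod_(t < K) step_weight eps (if success_before w t then 0 else p t) (w t).

Definition survival (t : nat) : R := \prod_(s < t) (1 - (1 - eps) * p s).

Lemma strategy_weight_rcons K (w : {ffun 'I_K -> step n}) x :
  strategy_weight (ffun_rcons w x)
  = strategy_weight w * step_weight eps (if success_before w K then 0 else p K) x.
Proof.
rewrite /strategy_weight big_ord_recr /= ffun_rcons_max success_before_rcons_le //.
congr (_ * _); apply: eq_bigr => t _.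
have -> : widen_ord (leqnSn K) t = lift ord_max t by apply: ord_inj; rewrite lift_max.
by rewrite ffun_rcons_lift success_before_rcons_le // ltnW.
Qed.

Hypothesis n_gt0 : (0 < n)%N.

Lemma sum_strategy_weight_no_success K t : (t <= K)%N ->
  \sum_(w : {ffun 'I_K -> step n}) strategy_weight w * (~~ success_before w t)%:R
  = survival t.
Proof.
elim: K t => [|K IHK] t le_tK.
  move: le_tK; rewrite leqn0 => /eqP ->.
  rewrite /survival big_ord0 (eq_bigr (fun _ => 1)) => [|w _].
    by rewrite sumr_const card_ffun card_ord expn0.
  by rewrite /strategy_weight /success_before big_ord0 hit_before0 mul1r.
rewrite sum_ffun_rcons; case: (leqP t K) => [le_t|lt_Kt].
  rewrite -IHK //; apply: eq_bigr => w _.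
  under eq_bigr do rewrite strategy_weight_rcons success_before_rcons_le // mulrAC.
  by rewrite -mulr_sumr sum_step_weight // mulr1.
have -> : t = K.+1 by apply/eqP; rewrite eqn_leq le_tK.
rewrite /survival big_ord_recr /= -/(survival K) -(IHK K) // mulr_suml.
apply: eq_bigr => w _.
under eq_bigr do rewrite strategy_weight_rcons success_before_rcons_last.
case: (success_before w K) => /=.
  by rewrite mulr0 mul0r; apply: big1 => x _; rewrite mulr0.
under eq_bigr do rewrite -mulrA.
by rewrite -mulr_sumr sum_step_weight_fail // mulr1.
Qed.

Lemma sum_strategy_weight_first_hit K :
  \sum_(w : {ffun 'I_K -> step n})
     strategy_weight w * (first_hit (fun s => attempt_succeeds (w s)))%:R
  = \sum_(t < K.+1) survival t.
Proof.
under eq_bigr do rewrite first_hit_count natr_sum mulr_sumr.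
rewrite exchange_big; apply: eq_bigr => t _.
exact: (sum_strategy_weight_no_success (ltn_ord t : (t <= K)%N)).
Qed.

End StrategyWeight.

Lemma strategy_weight_ge0 (R : realFieldType) (eps : R) n (p : nat -> R) K
    (w : {ffun 'I_K -> step n}) :
  0 <= eps <= 1 -> (forall t, 0 <= p t <= 1) -> 0 <= strategy_weight eps p w.
Proof.
move=> eps01 p01; apply: prodr_ge0 => t _; apply: step_weight_ge0 => //.
by case: success_before; rewrite ?lexx ?ler01.
Qed.

Lemma Lcount_complete n K (x0 : 'I_n) (om : outcome n K) t : Lcount x0 om t = t.
Proof.
rewrite /Lcount; under eq_bigr do rewrite /inN /nbhd in_setT.
by rewrite sum_nat_const_nat subn1 muln1.
Qed.

Lemma wf_weightE (R : archiRealFieldType) (eps qb : R) n K (x0 : 'I_n)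
    (om : outcome n K) :
  wf_weight eps qb x0 om = (n%:R)^-1 * strategy_weight eps (pwf eps qb) om.2.
Proof.
rewrite /wf_weight /strategy_weight; congr (_ * _); apply: eq_bigr => t _.
rewrite /wf_attempt_prob /inN /nbhd in_setT Lcount_complete ih_by_success_before.
by case: success_before.
Qed.

Lemma hitTIH_first_hit n K (om : outcome n K) :
  hitTIH om = first_hit (fun s => attempt_succeeds (om.2 s)).
Proof. by []. Qed.

Lemma hitT_le_hitTIH n K (x0 : 'I_n) (om : outcome n K) : (hitT x0 om <= hitTIH om)%N.
Proof.
apply: first_hit_subpred => s /andP[attempt success].
by rewrite /= /stepAt valK attempt success.
Qed.

Lemma wf_expect_hitTIH (R : archiRealFieldType) (eps qb : R) n K (x0 : 'I_n) :
  (0 < n)%N ->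
  wf_expect eps qb x0 (@hitTIH n K) = \sum_(t < K.+1) survival eps (pwf eps qb) t.
Proof.
move=> n_gt0; rewrite /wf_expect sum_pair.
under eq_bigr do under eq_bigr do rewrite wf_weightE hitTIH_first_hit -mulrA.
under eq_bigr do rewrite -mulr_sumr sum_strategy_weight_first_hit //.
rewrite -mulr_suml sumr_const card_ord -[_ *+ n]mulr_natr mulVf ?mul1r //.
by rewrite pnatr_eq0 -lt0n.
Qed.

Lemma sum_prod_le_potential (R : numDomainType) (f V : nat -> R) N :
  (forall t, 0 <= f t) -> (forall t, 0 <= V t) -> (forall t, V t = 1 + f t * V t.+1) ->
  \sum_(t < N) \prod_(s < t) f s <= V 0.
Proof.
move=> f_ge0 V_ge0 VS.
have telescope : \sum_(t < N) \prod_(s < t) f s + (\prod_(s < N) f s) * V N = V 0.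
  elim: N => [|N IHN]; first by rewrite !big_ord0 add0r mul1r.
  by rewrite !big_ord_recr /= -IHN [V N]VS; ring.
by rewrite -telescope lerDl mulr_ge0 ?prodr_ge0.
Qed.

Section WaterFilling.
Variables (R : archiRealFieldType) (eps qb : R) (z : int).
Hypotheses (eps_ge0 : 0 <= eps) (eps_lt1 : eps < 1) (qb_gt0 : 0 < qb)
  (tstar_int : qb^-1 - eps / (1 - eps) = z%:~R).

(* [lra] does not use section hypotheses, hence the [move:]s before it below. *)
Let eps_neq1 : 1 - eps != 0.
Proof. by rewrite subr_eq0 eq_sym lt_eqF. Qed.

Let E_ge0 : 0 <= eps / (1 - eps).
Proof. by apply: divr_ge0 => //; rewrite subr_ge0 ltW. Qed.

Lemma tstarE : tstar eps qb = z.
Proof. by rewrite /tstar tstar_int intrKceil. Qed.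

Lemma filling_level t : (t%:Z < z - 1)%R -> eps / (1 - eps) + 2 <= qb^-1 - t%:R.
Proof.
move=> lt_tz; have : (t%:Z + 2 <= z)%R by lia.
by rewrite -(ler_int R) intrD !mulrz_nat -tstar_int; lra.
Qed.

Lemma pwf_filling t : (t%:Z < z - 1)%R -> (1 - eps) * pwf eps qb t = (qb^-1 - t%:R)^-1.
Proof.
move=> lt_tz; have qb_neq0 := lt0r_neq0 qb_gt0.
rewrite /pwf tstarE lt_tz; have -> : 1 - t%:R * qb = qb * (qb^-1 - t%:R) by field.
by rewrite mulrA [(1 - eps) * _]mulrC divfK // invfM mulrA mulfV ?mul1r.
Qed.

Lemma pwf_full t : ~~ (t%:Z < z - 1)%R -> pwf eps qb t = 1.
Proof. by rewrite /pwf tstarE => /negbTE ->. Qed.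

Lemma pwf_ge0_le1 t : 0 <= pwf eps qb t <= 1.
Proof.
have [lt_tz|ge_tz] := boolP (t%:Z < z - 1)%R; last by rewrite pwf_full // ler01 lexx.
have level := filling_level lt_tz.
have -> : pwf eps qb t = ((1 - eps) * (qb^-1 - t%:R))^-1.
  by rewrite invfM -pwf_filling // mulKf.
have level_mul : 1 <= (1 - eps) * (qb^-1 - t%:R).
  have : (1 - eps) * (eps / (1 - eps) + 2) <= (1 - eps) * (qb^-1 - t%:R).
    by rewrite ler_wpM2l // subr_ge0 ltW.
  by rewrite mulrDr mulrC divfK //; move: eps_lt1; lra.
have u_gt0 := lt_le_trans ltr01 level_mul.
by rewrite invr_ge0 (ltW u_gt0) invf_le1.
Qed.

Definition water_value (u : R) : R := (u + 1) / 2 + eps / (2 * (1 - eps) ^+ 2 * u).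

Definition wf_potential (t : nat) : R :=
  if (t%:Z < z - 1)%R then water_value (qb^-1 - t%:R) else (1 - eps)^-1.

Lemma water_valueS u : u != 0 -> u - 1 != 0 ->
  water_value u = 1 + (1 - u^-1) * water_value (u - 1).
Proof.
by move=> u_neq0 u1_neq0; rewrite /water_value; field; rewrite eps_neq1 u_neq0 u1_neq0.
Qed.

Lemma water_value_full : water_value (1 - eps)^-1 = (1 - eps)^-1.
Proof. by rewrite /water_value; field. Qed.

Lemma wf_potentialS t :
  wf_potential t = 1 + (1 - (1 - eps) * pwf eps qb t) * wf_potential t.+1.
Proof.
rewrite /wf_potential; case: ifPn => [lt_tz|ge_tz]; last first.
  rewrite ifF; last by apply/negbTE; move: ge_tz; lia.
  by rewrite pwf_full // mulr1; field.
have level := filling_level lt_tz.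
have u_neq0 : qb^-1 - t%:R != 0 by apply: lt0r_neq0; move: E_ge0; lra.
have u1_neq0 : qb^-1 - t%:R - 1 != 0 by apply: lt0r_neq0; move: E_ge0; lra.
rewrite pwf_filling // water_valueS //; congr (1 + _ * _).
case: ifPn => [_|ge_t1z]; first by rewrite -natr1 opprD addrA.
have -> : qb^-1 - t%:R - 1 = (1 - eps)^-1; last exact: water_value_full.
have /(congr1 (fun k : int => k%:~R : R)) : (t%:Z + 2 = z)%R by move: lt_tz ge_t1z; lia.
rewrite intrD !mulrz_nat -tstar_int => qbE.
by rewrite (_ : qb^-1 = t%:R + 2 + eps / (1 - eps)); [field | lra].
Qed.

Lemma water_value_ge0 u : 0 < u -> 0 <= water_value u.
Proof.
move=> u_gt0; have eps_le1 : 0 <= 1 - eps by rewrite subr_ge0 ltW.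
apply: addr_ge0; apply: divr_ge0 => //.
- by apply: addr_ge0 => //; apply: ltW.
- by apply: mulr_ge0; [apply: mulr_ge0 => //; apply: exprn_ge0 | apply: ltW].
Qed.

Lemma wf_potential_ge0 t : 0 <= wf_potential t.
Proof.
rewrite /wf_potential; case: ifPn => [lt_tz|_]; last by rewrite invr_ge0 subr_ge0 ltW.
have level := filling_level lt_tz.
by apply: water_value_ge0; move: E_ge0; lra.
Qed.

Lemma wf_potential0_le :
  wf_potential 0 <= 1 / (2 * qb) + 1 / 2 + qb * eps / (2 * (1 - eps) ^+ 2).
Proof.
have qb_neq0 := lt0r_neq0 qb_gt0.
rewrite /wf_potential subr0; case: ifPn => [_|_].
  rewrite le_eqVlt; apply/predU1l; rewrite /water_value.
  by field; rewrite eps_neq1 qb_neq0.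
have : 0 <= (z%:~R : R) * (z%:~R - 1).
  by rewrite -[1]/(1%:~R) -intrB -intrM ler0z; nia.
rewrite -tstar_int => zz_ge0.
rewrite (_ : 1 / (2 * qb) + _ + _ = (1 - eps)^-1 + qb / 2 *
    ((qb^-1 - eps / (1 - eps)) * (qb^-1 - eps / (1 - eps) - 1))); last first.
  by field; rewrite eps_neq1 qb_neq0.
by rewrite lerDl; apply: mulr_ge0 => //; apply: divr_ge0; rewrite ?ltW.
Qed.

Lemma sum_wf_survival_le N :
  \sum_(t < N) survival eps (pwf eps qb) t
    <= 1 / (2 * qb) + 1 / 2 + qb * eps / (2 * (1 - eps) ^+ 2).
Proof.
apply: le_trans wf_potential0_le.
apply: sum_prod_le_potential wf_potential_ge0 wf_potentialS.
move=> t; have /andP[pwf_ge0 pwf_le1] := pwf_ge0_le1 t; move: eps_ge0 eps_lt1; nra.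
Qed.

End WaterFilling.

Theorem lemma2 (R : archiRealFieldType) (n K : nat) (x0 : 'I_n) (eps qb : R) :
  (0 < n)%N ->
  0 <= eps < 1 ->
  0 < qb <= 1 ->
  (exists z : int, qb^-1 - eps / (1 - eps) = z%:~R) ->
  wf_expect eps qb x0 (@hitT n K x0) <= wf_expect eps qb x0 (@hitTIH n K) /\
  wf_expect eps qb x0 (@hitTIH n K)
    <= 1 / (2 * qb) + 1 / 2 + qb * eps / (2 * (1 - eps) ^+ 2).
Proof.
move=> n_gt0 /andP[eps_ge0 eps_lt1] /andP[qb_gt0 _] [z tstar_int].
have pwf01 := pwf_ge0_le1 eps_ge0 eps_lt1 qb_gt0 tstar_int.
split.
  apply: ler_sum => om _; rewrite ler_wpM2l ?ler_nat ?hitT_le_hitTIH // wf_weightE.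
  by rewrite mulr_ge0 ?invr_ge0 ?ler0n // strategy_weight_ge0 // eps_ge0 ltW.
by rewrite wf_expect_hitTIH // (sum_wf_survival_le eps_ge0 eps_lt1 qb_gt0 tstar_int).
Qed.
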